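(* Let $\delta\ge 2$, $n\ge 8\delta-7$ and $s$ be integers with $\delta+1\le s\le n/2$. Then $$\rho_{\mathcal D}\big(K_s\vee(K_{n-2s+1}\cup(s-1)K_1)\big)\ >\ \rho_{\mathcal D}\big(K_\delta\vee(K_{n-2\delta+1}\cup(\delta-1)K_1)\big).$$
   Context: For a connected graph $G$, $\mathcal D(G)$ is its distance matrix (entry $(i,j)$ is the distance between the $i$-th and $j$-th vertices) and $\rho_{\mathcal D}(G)$ its largest eigenvalue. $K_m$ is the complete graph on $m$ vertices, $tK_1$ the edgeless graph on $t$ vertices, $\cup$ disjoint union, and $\vee$ the join. *)

From HB Require Import structures.
From mathcomp Require Import all_boot all_order all_algebra.
From mathcomp Require Import reals.
Set Implicit Arguments. Unset Strict Implicit. Unset Printing Implicit Defensive.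
Import Order.TTheory GRing.Theory Num.Theory.

(* Simple graphs are symmetric irreflexive relations on a finType. *)

Fixpoint walkn (T : finType) (e : rel T) (k : nat) (x y : T) : bool :=
  if k is k'.+1 then [exists z, e x z && walkn e k' z y] else x == y.

(* Graph distance: least k with a walk of length k (shortest walks are
   paths, of length < #|T|); defaults to #|T| if unreachable, which never
   happens in a connected graph. *)
Definition gdist (T : finType) (e : rel T) (x y : T) : nat :=
  \big[minn/#|T|]_(k < #|T| | walkn e k x y) k.

Definition distmx (R : nzRingType) (n : nat) (e : rel 'I_n) : 'M[R]_n :=
  \matrix_(i, j) ((gdist e i j)%:R)%R.

Definition largest_eig (R : realFieldType) (n : nat) (A : 'M[R]_n) (r : R) :=
  eigenvalue A r /\ (forall b, eigenvalue A b -> b <= r)%R.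

(* The graph K_s \/ (K_{n-2s+1} u (s-1)K_1) on vertex set 'I_n:
   vertices 0..s-1 form K_s (joined to everything), vertices
   s..n-s form K_{n-2s+1}, vertices n-s+1..n-1 are the s-1 isolated K_1's. *)
Definition inB (n s : nat) (i : 'I_n) : bool := (s <= i) && (i <= n - s).
Arguments inB : clear implicits.
Definition Kjoin (n s : nat) : rel 'I_n :=
  fun i j => (i != j) && [|| i < s, j < s | inB n s i && inB n s j].
Arguments Kjoin : clear implicits.

From HB Require Import structures.
From mathcomp Require Import all_boot all_order all_algebra.
From mathcomp Require Import reals.
From mathcomp Require Import ring lra zify.
Set Implicit Arguments. Unset Strict Implicit. Unset Printing Implicit Defensive.
Import Order.TTheory GRing.Theory Num.Theory.
Local Open Scope ring_scope.

(* The graph K_a \/ (K_{n-2a+1} u (a-1)K_1) has diameter 2 and three vertex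
   classes (the K_a, the K_{n-2a+1}, the isolated vertices), so its distance
   matrix has a positive eigenvector constant on the classes.  Its eigenvalue
   t is a root of an explicit cubic [kchar n a t], and a positive eigenvector
   of a nonnegative matrix carries the largest eigenvalue.  Comparing the
   cubics for a = s and a = delta, an identity
     kchar_s(t) W_delta(t) = kchar_delta(t) W_s(t) - (s - delta) B(t)
   with W_delta, B > 0 (B > 0 is where n >= 8 delta - 7 enters) shows that
   kchar_s is negative at rho(delta); hence its root in [rho(delta), 2n] is
   strictly larger. *)

Lemma norm_eigenvalue_le_posvec (R : realFieldType) n (A : 'M[R]_n)
    (u : 'cV[R]_n) r b :
  (forall i j, 0 <= A i j) -> (forall i, 0 < u i 0) -> A *m u = r *: u ->
  eigenvalue A b -> `|b| <= r.
Proof.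
move=> A_ge0 u_gt0 Au /eigenvalueP[v vA v_neq0].
have [j0 vj0] : exists j, v 0 j != 0.
  apply/existsP; apply: contraR v_neq0 => /existsPn v0.
  by apply/eqP/rowP => j; rewrite mxE; apply/eqP/negPn/v0.
pose S := \sum_j `|v 0 j| * u j 0.
have S_gt0 : 0 < S.
  rewrite /S (bigD1 j0) //= ltr_pwDl ?mulr_gt0 ?normr_gt0 //.
  by apply: sumr_ge0 => j _; rewrite mulr_ge0 // ltW.
suff : `|b| * S <= r * S by rewrite ler_pM2r.
have -> : `|b| * S = \sum_j `|\sum_i v 0 i * A i j| * u j 0.
  rewrite /S mulr_sumr; apply: eq_bigr => j _.
  by have := congr1 (fun w : 'rV_n => w 0 j) vA; rewrite !mxE => ->; rewrite normrM mulrA.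
have -> : r * S = \sum_i `|v 0 i| * \sum_j A i j * u j 0.
  rewrite /S mulr_sumr; apply: eq_bigr => i _.
  by have := congr1 (fun w : 'cV_n => w i 0) Au; rewrite !mxE => ->; rewrite mulrCA.
under [leRHS]eq_bigr do rewrite mulr_sumr.
rewrite exchange_big /=; apply: ler_sum => j _.
apply: le_trans (ler_wpM2r (ltW (u_gt0 j)) (ler_norm_sum _ _ _)) _.
rewrite mulr_suml; apply: ler_sum => i _.
by rewrite normrM (ger0_norm (A_ge0 i j)) mulrA.
Qed.

Lemma largest_eig_posvec (R : realFieldType) n (A : 'M[R]_n)
    (u : 'rV[R]_n) r :
  (0 < n)%N -> A^T = A -> (forall i j, 0 <= A i j) -> (forall i, 0 < u 0 i) ->
  u *m A = r *: u -> largest_eig A r.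
Proof.
move=> n_gt0 A_sym A_ge0 u_gt0 uA; split.
  apply/eigenvalueP; exists u => //.
  by apply/eqP => /rowP/(_ (Ordinal n_gt0))/eqP; rewrite mxE (gt_eqF (u_gt0 _)).
move=> b bA; apply: le_trans (ler_norm b) _.
apply: (@norm_eigenvalue_le_posvec _ _ A u^T) => // [i|].
  by rewrite mxE.
by rewrite -{1}A_sym -trmx_mul uA linearZ.
Qed.

(* [minn] has no unit on nat, so only the semigroup big-operator lemmas
   (e.g. [bigD1]) apply to the fold defining [gdist]. *)
HB.instance Definition _ := SemiGroup.isComLaw.Build nat minn minnA minnC.

Lemma gdist_eq (T : finType) (e : rel T) x y k : (k < #|T|)%N ->
  walkn e k x y -> (forall k', (k' < k)%N -> ~~ walkn e k' x y) ->
  gdist e x y = k.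
Proof.
move=> kT walk_k shorter; apply/eqP; rewrite eqn_leq; apply/andP; split.
  by rewrite /gdist (bigD1 (Ordinal kT)) //= geq_minl.
apply: (big_ind (leq k)) => [|m1 m2|k' walk_k']; first exact: ltnW.
  by rewrite leq_min => ->.
by rewrite leqNgt; apply: contraL walk_k'; apply: shorter.
Qed.

Lemma walkn1 (T : finType) (e : rel T) x y : walkn e 1 x y = e x y.
Proof.
apply/existsP/idP => [[z /andP[exz /eqP <-]] // | exy].
by exists y; rewrite exy eqxx.
Qed.

Lemma gdist_diam2 (T : finType) (e : rel T) x y : (2 < #|T|)%N ->
  (x != y -> ~~ e x y -> exists z, e x z && e z y) ->
  gdist e x y = if x == y then 0%N else if e x y then 1%N else 2%N.
Proof.
move=> T_gt2 common_nbr.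
have [<-|xy] := eqVneq.
  by apply: gdist_eq => //=; apply: leq_trans T_gt2.
case: ifPn => exy.
  apply: gdist_eq => [||k]; rewrite ?walkn1 //; first exact: leq_trans T_gt2.
  by rewrite ltnS leqn0 => /eqP->.
apply: gdist_eq => // [|k].
  have [z /andP[exz ezy]] := common_nbr xy exy.
  by rewrite -walkn1 in ezy; apply/existsP; exists z; rewrite exz.
by case: k => [|[|k]] // _; rewrite walkn1.
Qed.

Definition kclass (n a i : nat) : nat :=
  if (i < a)%N then 0 else if (i <= n - a)%N then 1 else 2.

Definition kadj (k l : nat) : bool := [|| k == 0, l == 0 | (k == 1) && (l == 1)]%N.

Lemma kclass_lt3 n a i : (kclass n a i < 3)%N.
Proof. by rewrite /kclass; case: ifP => //; case: ifP. Qed.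

Lemma Kjoin_kclass n a (i j : 'I_n) :
  Kjoin n a i j = (i != j) && kadj (kclass n a i) (kclass n a j).
Proof.
have class0 (k : 'I_n) : (kclass n a k == 0)%N = (k < a)%N.
  by rewrite /kclass; case: ifP => //; case: ifP.
have class1 (k : 'I_n) : (kclass n a k == 1)%N = inB n a k.
  by rewrite /kclass /inB; case: ltnP => //=; case: ifP.
by rewrite /Kjoin /kadj !class0 !class1.
Qed.

Lemma distmx_Kjoin (R : nzRingType) n a (i j : 'I_n) : (0 < a)%N -> (2 < n)%N ->
  distmx R (Kjoin n a) i j =
  if i == j then 0 else if kadj (kclass n a i) (kclass n a j) then 1 else 2.
Proof.
move=> a_gt0 n_gt2; rewrite mxE gdist_diam2 ?card_ord // => [|ij not_ij].
  by rewrite Kjoin_kclass; case: eqP => //= _; case: kadj.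
have n_gt0 : (0 < n)%N by apply: leq_trans n_gt2.
exists (Ordinal n_gt0); rewrite /Kjoin /= a_gt0 !orbT !andbT.
move: not_ij; rewrite /Kjoin ij !negb_or => /and3P[ia ja _].
by apply/andP; split; [apply: contraNneq ia => -> | apply: contraNneq ja => <-].
Qed.

(* Weights of the three vertex classes in the Perron vector, normalised so
   that the eigen-equation of every class has the same residual
   [kchar N A t]. *)
Definition kweight {R : nzRingType} (N A t : R) (k : nat) : R :=
  match k with
  | 0 => (t + 1) * (t + 2) - (A - 1) * (t + N - 2 * A + 2)
  | 1 => (t + 1) * (t + 2)
  | _ => (t + 1) * (t + N - 2 * A + 2)
  end.

Definition kchar {R : nzRingType} (N A t : R) : R :=
  (t - (A - 1)) * kweight N A t 0 - (N - 2 * A + 1) * kweight N A t 1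
  - (A - 1) * kweight N A t 2.

Section KChar.
Variable R : realFieldType.
Implicit Types N A S D t : R.

Lemma kweight_gt0 N A t k : 1 <= A -> 2 * A <= N -> N - 1 <= t ->
  0 < kweight N A t k.
Proof. by move=> *; case: k => [|[|k]] /=; nra. Qed.

Lemma kchar_lt0 N A : 2 <= A -> 2 * A <= N -> kchar N A (N - 1) < 0.
Proof.
move=> A2 AN.
have -> : kchar N A (N - 1) = - ((A-1) * (3*(N-1)^+2 - 6*(A-1)*(N-1) + (N-1)
   + 2*(A-1)^+2 - 3*(A-1) - 1)).
  by rewrite /kchar /=; ring.
rewrite oppr_lt0 pmulr_rgt0; last lra.
have : 0 <= (N-1) * (N - 1 - 2*(A-1)) by apply: mulr_ge0; lra.
nra.
Qed.

Lemma kchar_gt0 N A : 1 <= A -> 2 * A <= N -> 0 < kchar N A (2 * N).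
Proof. by move=> *; rewrite /kchar /=; nra. Qed.

Lemma kchar_cross N S D t :
  kchar N S t * (D * kweight N D t 0 + (N - 2 * D + 1) * kweight N D t 1
                 + (D - 1) * kweight N D t 2) =
  kchar N D t * (S * kweight N S t 0 + (N - 2 * S + 1) * kweight N S t 1
                 + (S - 1) * kweight N S t 2)
  - (S - D) * ((N - 2 * S + 1) * kweight N S t 1 ^+ 2
               + (N - S - 2 * D + 1) * kweight N S t 2 * kweight N S t 1
               - (D - 1) * kweight N S t 0 * kweight N D t 2).
Proof. by rewrite /kchar /=; ring. Qed.

Lemma kchar_lt0_at_root N S D t :
  2 <= D -> D + 1 <= S -> 2 * S <= N -> 2 * D - 2 <= N - S - 2 * D + 1 ->
  N - 1 <= t -> kchar N D t = 0 -> kchar N S t < 0.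
Proof.
move=> D2 DS SN DNS tN rootD.
have wS k : 0 < kweight N S t k by apply: kweight_gt0; lra.
have wD k : 0 < kweight N D t k by apply: kweight_gt0; lra.
have wS02 : kweight N S t 0 <= kweight N S t 2 by rewrite /=; nra.
have wD21 : kweight N D t 2 <= 2 * kweight N S t 1 by rewrite /=; nra.
have := kchar_cross N S D t; rewrite rootD mul0r sub0r.
move: (wS 0%N) (wS 1%N) (wS 2%N) (wD 0%N) (wD 1%N) (wD 2%N) wS02 wD21.
set x := kweight N S t 0; set y := kweight N S t 1; set z := kweight N S t 2.
set x' := kweight N D t 0; set y' := kweight N D t 1; set z' := kweight N D t 2.
move=> x0 y0 z0 x'0 y'0 z'0 xz z'y cross.
have W0 : 0 < D * x' + (N - 2 * D + 1) * y' + (D - 1) * z'.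
  have : 0 < D * x' by apply: mulr_gt0; lra.
  have : 0 <= (N - 2 * D + 1) * y' by apply: mulr_ge0; lra.
  have : 0 <= (D - 1) * z' by apply: mulr_ge0; lra.
  lra.
have B0 : 0 < (N - 2 * S + 1) * y ^+ 2 + (N - S - 2 * D + 1) * z * y
              - (D - 1) * x * z'.
  have : (D - 1) * x * z' <= (2 * D - 2) * z * y.
    have : x * z' <= z * (2 * y) by apply: ler_pM; lra.
    nra.
  have : (2 * D - 2) * z * y <= (N - S - 2 * D + 1) * z * y.
    have : 0 < z * y by exact: mulr_gt0.
    nra.
  have : 0 < (N - 2 * S + 1) * y ^+ 2 by apply: mulr_gt0; [lra | exact: exprn_gt0].
  lra.
have : kchar N S t * (D * x' + (N - 2 * D + 1) * y' + (D - 1) * z') < 0.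
  by rewrite cross oppr_lt0 mulr_gt0 //; lra.
by rewrite pmulr_llt0.
Qed.

End KChar.

Lemma sum_kclass (R : nzRingType) n a (g : nat -> R) :
  (1 <= a)%N -> (2 * a <= n)%N ->
  \sum_(i < n) g (kclass n a i) =
  a%:R * g 0%N + (n%:R - 2 * a%:R + 1) * g 1%N + (a%:R - 1) * g 2%N.
Proof.
move=> a_ge1 an.
have const_on lo hi k : (forall i, (lo <= i < hi)%N -> kclass n a i = k) ->
    \sum_(lo <= i < hi) g (kclass n a i) = (hi - lo)%:R * g k.
  move=> cl; rewrite (eq_big_nat _ _ (fun i hi => congr1 g (cl i hi))).
  by rewrite sumr_const_nat mulr_natl.
have split_at m k : (m <= k <= n)%N -> \sum_(m <= i < n) g (kclass n a i) =
    \sum_(m <= i < k) g (kclass n a i) + \sum_(k <= i < n) g (kclass n a i).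
  by case/andP; apply: big_cat_nat.
rewrite -(big_mkord xpredT (fun i => g (kclass n a i))).
rewrite (split_at 0 a); last lia.
rewrite (split_at a (n - a + 1)%N); last lia.
rewrite (const_on 0 a 0)%N ?(const_on a (n - a + 1) 1)%N
  ?(const_on (n - a + 1) n 2)%N;
  try by move=> i /andP[lo hi]; rewrite /kclass;
    case: (ltnP i a) => ?; [|case: (leqP i (n - a)) => ?]; lia.
have -> : (n - a + 1 - a = n - 2 * a + 1)%N by lia.
have -> : (n - (n - a + 1) = a - 1)%N by lia.
by rewrite subn0 natrD !natrB ?natrM ?addrA.
Qed.

Definition kweightv {R : nzRingType} n a (t : R) : 'rV[R]_n :=
  \row_(i < n) kweight n%:R a%:R t (kclass n a i).

Lemma kweightv_eigen (R : realFieldType) n a t : (1 <= a)%N -> (2 * a <= n)%N ->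
  (2 < n)%N -> kchar n%:R a%:R t = 0 ->
  kweightv n a t *m distmx R (Kjoin n a) = t *: kweightv n a t.
Proof.
move=> a_ge1 an n_gt2 root_t; apply/rowP => j; rewrite mxE.
under eq_bigr => i _ do rewrite distmx_Kjoin // mxE.
rewrite !mxE.
pose d k l : R := if kadj k l then 1 else 2.
pose G k := kweight n%:R a%:R t k * d k (kclass n a j).
transitivity (\sum_(i < n) (G (kclass n a i) - (i == j)%:R * G (kclass n a j))).
  apply: eq_bigr => i _.
  by rewrite /G /d; case: eqP => [->|_]; rewrite ?mul1r ?subrr ?mulr0 ?mul0r ?subr0.
rewrite sumrB sum_kclass // (bigD1 j) //= eqxx mul1r big1 => [|i /negbTE ->]; last first.
  by rewrite mul0r.
rewrite addr0 /G /d; apply/eqP; rewrite eq_sym -subr_eq0; apply/eqP.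
by case: (kclass n a j) (kclass_lt3 n a j) => [|[|[|]]] // _;
  rewrite /kadj /= -root_t /kchar /=; ring.
Qed.

Lemma largest_eig_Kjoin (R : realFieldType) n a t : (1 <= a)%N -> (2 * a <= n)%N ->
  (2 < n)%N -> n%:R - 1 <= t -> kchar n%:R a%:R t = 0 ->
  largest_eig (distmx R (Kjoin n a)) t.
Proof.
move=> a_ge1 an n_gt2 t_ge root_t.
have a_ge1R : 1 <= a%:R :> R by rewrite ler1n.
have anR : 2 * a%:R <= n%:R :> R by rewrite -natrM ler_nat.
apply: (@largest_eig_posvec _ _ _ (kweightv n a t)).
- exact: leq_trans n_gt2.
- apply/matrixP => i j; rewrite mxE !distmx_Kjoin // eq_sym.
  by rewrite /kadj orbCA andbC.
- by move=> i j; rewrite distmx_Kjoin //; case: ifP => // _; case: ifP.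
- by move=> i; rewrite mxE; apply: kweight_gt0.
- exact: kweightv_eigen.
Qed.

Lemma kchar_ivt (R : rcfType) (N A lo hi : R) :
  lo <= hi -> kchar N A lo <= 0 <= kchar N A hi ->
  exists2 r, lo <= r <= hi & kchar N A r = 0.
Proof.
move=> lo_hi sign_change.
pose c := A - 1; pose b := N - 2 * A + 1.
pose p : {poly R} := ('X - c%:P) * (('X + 1) * ('X + 2%:P) - c%:P * ('X + (b + 1)%:P))
  - b%:P * (('X + 1) * ('X + 2%:P)) - c%:P * (('X + 1) * ('X + (b + 1)%:P)).
have p_kchar x : p.[x] = kchar N A x.
  by rewrite !hornerE /kchar /= /b /c; ring.
have p_sign : p.[lo] <= 0 <= p.[hi] by rewrite !p_kchar.
have [r r_in /rootP] := poly_ivt lo_hi p_sign.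
by rewrite p_kchar; exists r.
Qed.

Theorem mainTheorem6 (R : realType) (delta n s : nat) :
  (2 <= delta)%N -> (8 * delta - 7 <= n)%N ->
  (delta + 1 <= s)%N -> (2 * s <= n)%N ->
  exists r1 r2 : R,
    largest_eig (distmx R (Kjoin n s)) r1 /\
    largest_eig (distmx R (Kjoin n delta)) r2 /\
    r2 < r1.
Proof.
move=> delta_ge2 n_ge delta_lt_s s_le_half.
have n_gt2 : (2 < n)%N by lia.
have deltaR : 2 <= delta%:R :> R by rewrite (ler_nat R 2).
have sR : delta%:R + 1 <= s%:R :> R by rewrite natr1 ler_nat -addn1.
have snR : 2 * s%:R <= n%:R :> R by rewrite -natrM ler_nat.
have nR : 2 * delta%:R - 2 <= n%:R - s%:R - 2 * delta%:R + 1 :> R.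
  have : (4 * delta + s <= n + 3)%N by lia.
  by rewrite -(ler_nat R) !natrD; lra.
have [r2 /andP[r2_ge r2_le] root_r2] : exists2 r : R,
    n%:R - 1 <= r <= 2 * n%:R & kchar n%:R delta%:R r = 0.
  apply: kchar_ivt; first lra.
  by apply/andP; split; apply: ltW; [apply: kchar_lt0 | apply: kchar_gt0]; lra.
have s_neg := kchar_lt0_at_root deltaR sR snR nR r2_ge root_r2.
have [r1 /andP[r1_ge _] root_r1] : exists2 r : R,
    r2 <= r <= 2 * n%:R & kchar n%:R s%:R r = 0.
  by apply: kchar_ivt => //; rewrite (ltW s_neg) ltW ?kchar_gt0 //; lra.
exists r1, r2; split; last split.
- by apply: largest_eig_Kjoin => //; [lia | lra].
- by apply: largest_eig_Kjoin => //; lia.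
- by rewrite lt_neqAle r1_ge andbT; apply: contraTneq s_neg => ->; rewrite root_r1 ltxx.
Qed.
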